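(* Let $d\ge 1$ and suppose there exists a function $f:\{0,1\}^n\to\{0,1\}$ of degree $d$ with block sensitivity $b$. Then there exist $\tau\in\{0,1\}$ and $p\in\mathbb{R}^d$ such that $$\langle p, m_d(1)\rangle = 1,\qquad 0\le \langle p, m_d(k)\rangle \le 1 \ \text{ for each } k\in\{2,\dots,b-1\},\qquad \langle p, m_d(b)\rangle = \tau,$$ where $m_d:\mathbb{R}\to\mathbb{R}^d$ is the moment map $m_d(t)=(t,t^2,\dots,t^d)$ and $\langle\cdot,\cdot\rangle$ is the standard inner product on $\mathbb{R}^d$.
   Context: The degree of $f:\{0,1\}^n\to\{0,1\}$ is the degree of the unique multilinear real polynomial agreeing with $f$ on $\{0,1\}^n$. For $x\in\{0,1\}^n$ and $B\subseteq[n]$, $x^B$ is $x$ with the bits in $B$ flipped. The block sensitivity $\mathrm{bs}(f)$ is the maximum over $x\in\{0,1\}^n$ of the largest number $m$ of pairwise disjoint sets $B_1,\dots,B_m\subseteq[n]$ with $f(x^{B_j})\neq f(x)$ for all $j$. *)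

From mathcomp Require Import all_boot all_order all_algebra.
From mathcomp Require Import reals.
Set Implicit Arguments. Unset Strict Implicit. Unset Printing Implicit Defensive.
Import Order.TTheory GRing.Theory Num.Theory.
Local Open Scope ring_scope.

Definition cube (n : nat) := {ffun 'I_n -> bool}.

Definition flip (n : nat) (x : cube n) (B : {set 'I_n}) : cube n :=
  [ffun i => if i \in B then ~~ x i else x i].

(* A multilinear real polynomial in n variables: coefficients c_S for S ⊆ [n],
   representing  sum_S c_S prod_{i in S} x_i. *)
Definition mlpoly (R : nzRingType) (n : nat) := {ffun {set 'I_n} -> R}.

Definition mleval (R : nzRingType) (n : nat) (P : mlpoly R n) (x : cube n) : R :=
  \sum_(S : {set 'I_n}) P S * \prod_(i in S) (x i)%:R.

(* degree of a multilinear polynomial: largest |S| with nonzero coefficient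
   (0 for the zero polynomial). *)
Definition mldeg (R : nzRingType) (n : nat) (P : mlpoly R n) : nat :=
  \max_(S : {set 'I_n} | P S != 0) #|S|.

(* f has degree d: the (unique) multilinear real polynomial agreeing with f
   on {0,1}^n has degree d. *)
Definition has_degree (R : nzRingType) (n : nat) (f : cube n -> bool) (d : nat) : Prop :=
  exists P : mlpoly R n, (forall x, mleval P x = (f x)%:R) /\ mldeg P = d.

Definition sens_blocks (n : nat) (f : cube n -> bool) (x : cube n)
  (F : {set {set 'I_n}}) : bool :=
  [forall B in F, f (flip x B) != f x] &&
  [forall B in F, forall C in F, (B != C) ==> [disjoint B & C]].

Definition bs_at (n : nat) (f : cube n -> bool) (x : cube n) : nat :=
  \max_(F : {set {set 'I_n}} | sens_blocks f x F) #|F|.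

Definition bs (n : nat) (f : cube n -> bool) : nat :=
  \max_(x : cube n) bs_at f x.

Definition moment (R : nzRingType) (d : nat) (t : R) : 'rV[R]_d :=
  \row_(i < d) t ^+ i.+1.

Definition inner (R : nzRingType) (d : nat) (u v : 'rV[R]_d) : R :=
  \sum_(i < d) u 0 i * v 0 i.

From mathcomp Require Import all_boot all_order all_algebra.
From mathcomp Require Import reals.
From mathcomp Require Import ring zify.
Set Implicit Arguments. Unset Strict Implicit. Unset Printing Implicit Defensive.
Import Order.TTheory GRing.Theory Num.Theory.

(* Fix x and a largest family F of pairwise disjoint sensitive blocks for f at
   x, and for T ⊆ F let h(T) = [f(x^(∪T)) ≠ f(x)].  Each bit of x^(∪T) is either
   constant or an affine function of the indicator of the block of F containing
   it, so h is a multilinear polynomial of degree ≤ deg f in the indicator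
   vector of T.  Summing the monomial [J ⊆ T] over the k-subsets T of F gives
   C(|F|,k) C(k,|J|) / C(|F|,|J|), a polynomial of degree |J| in k
   (Minsky-Papert symmetrization).  Hence the average r(k) of h over the
   k-subsets of F is a polynomial of degree ≤ d with r(0) = 0, r(1) = 1 (every
   block is sensitive), 0 ≤ r(k) ≤ 1 and r(|F|) = h(F) ∈ {0,1}; p is the
   coefficient vector of r. *)

Lemma bin_sub_mul m j k : j <= k ->
  'C(m - j, k - j) * 'C(m, j) = 'C(m, k) * 'C(k, j).
Proof.
move=> jk; have [km|mk] := leqP k m; last first.
  rewrite (bin_small mk) mul0n.
  have [jm|mj] := leqP j m; last by rewrite (bin_small mj) muln0.
  by rewrite (@bin_small (m - j)) ?mul0n //; lia.
have fact_pos : 0 < j`! * ((k - j)`! * (m - k)`!) by rewrite !muln_gt0 !fact_gt0.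
apply/eqP; rewrite -(eqn_pmul2r fact_pos); apply/eqP.
have e : m - j - (k - j) = m - k by lia.
have := @bin_fact (m - j) (k - j) ltac:(lia); rewrite e => fact_mj.
have := @bin_fact m j ltac:(lia) => fact_m.
transitivity ('C(m - j, k - j) * ((k - j)`! * (m - k)`!) * ('C(m, j) * j`!)); first ring.
rewrite fact_mj.
transitivity ('C(m, j) * (j`! * (m - j)`!)); first ring.
rewrite fact_m -(bin_fact km) -(bin_fact jk); ring.
Qed.

Section Draws.
Variables (X : finType) (F : {set X}).

Definition draws (k : nat) : {set {set X}} := [set T : {set X} | T \subset F & #|T| == k].

Lemma card_draws_supset (J : {set X}) k : J \subset F -> #|J| <= k ->
  #|[set T in draws k | J \subset T]| = 'C(#|F| - #|J|, k - #|J|).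
Proof.
move=> JF Jk.
have injD : {in [set T in draws k | J \subset T] &, injective (fun T => T :\: J)}.
  move=> T1 T2; rewrite !inE => /andP[_ JT1] /andP[_ JT2] eT.
  by rewrite -(setID T1 J) -(setID T2 J) (setIidPr JT1) (setIidPr JT2) eT.
rewrite -(card_in_imset injD) -cardsDS // -cards_draws.
apply: eq_card => T'; rewrite [in RHS]inE; apply/imsetP/andP.
- case=> T; rewrite !inE => /andP[/andP[TF /eqP Tk] JT] ->.
  by rewrite setSD // cardsDS // Tk.
- case=> /[!subsetD] /andP[T'F dT'J] /eqP T'k.
  exists (T' :|: J); last by rewrite setDUl setDv setU0; apply/esym/setDidPl.
  rewrite !inE subUset T'F JF subsetUr cardsU (disjoint_setI0 dT'J) cards0 subn0.
  by rewrite T'k subnK // eqxx.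
Qed.

Lemma card_draws_supset_mul (J : {set X}) k : J \subset F ->
  #|[set T in draws k | J \subset T]| * 'C(#|F|, #|J|) = 'C(#|F|, k) * 'C(k, #|J|).
Proof.
move=> JF; have [Jk|kJ] := leqP #|J| k; first by rewrite card_draws_supset // bin_sub_mul.
rewrite (bin_small kJ) muln0 (_ : [set _ in _ | _] = set0) ?cards0 //.
apply/setP => T; rewrite !inE; apply/negbTE; apply/andP => -[/andP[_ /eqP Tk] JT].
by move: (subset_leq_card JT); rewrite Tk leqNgt kJ.
Qed.

Lemma draws0 : draws 0 = [set set0].
Proof.
apply/setP => T; rewrite !inE cards_eq0.
by have [->|] := eqVneq T set0; rewrite ?sub0set ?andbF.
Qed.

Lemma draws_card : draws #|F| = [set F].
Proof.
apply/setP => T; rewrite !inE eqEcard; case TF: (T \subset F) => //=.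
by rewrite eqn_leq (subset_leq_card TF).
Qed.

End Draws.

Local Open Scope ring_scope.

Section SetFunctionDegree.
Variables (R : comNzRingType) (X : finType) (F : {set X}).
Implicit Types (d : nat) (B : X) (J T : {set X}) (g : {set X} -> R).

(* On subsets T of F, g is a multilinear polynomial of degree at most d in the
   indicators [B \in T], B \in F: the monomial indexed by J is [J \subset T]. *)
Definition degree_le d g : Prop :=
  exists c : {set X} -> R,
    (forall J, c J != 0 -> (J \subset F) && (#|J| <= d)%N) /\
    (forall T, T \subset F -> g T = \sum_J c J * (J \subset T)%:R).

Lemma degree_le_ext d g1 g2 :
  (forall T, T \subset F -> g1 T = g2 T) -> degree_le d g1 -> degree_le d g2.
Proof. by move=> e12 [c [sc ec]]; exists c; split=> // T TF; rewrite -e12 ?ec. Qed.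

Lemma degree_le_widen d d' g :
  (d <= d')%N -> degree_le d g -> degree_le d' g.
Proof.
move=> le_dd' [c [sc ec]]; exists c; split=> // J /sc /andP[JF Jd].
by rewrite JF (leq_trans Jd).
Qed.

Lemma degree_le_cst (a : R) : degree_le 0 (fun=> a).
Proof.
exists (fun J => if J == set0 then a else 0); split.
  by move=> J; have [->|] := eqVneq J set0; rewrite ?eqxx // sub0set cards0.
move=> T _; rewrite (bigD1 set0) //= eqxx sub0set mulr1 big1 ?addr0 // => J /negbTE ->.
by rewrite mul0r.
Qed.

Lemma degree_le_mem B : B \in F -> degree_le 1 (fun T => (B \in T)%:R).
Proof.
move=> BF; exists (fun J => if J == [set B] then 1 else 0); split.
  by move=> J; have [->|] := eqVneq J [set B]; rewrite ?eqxx // sub1set BF cards1.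
move=> T _; rewrite (bigD1 [set B]) //= eqxx sub1set mul1r big1 ?addr0 // => J /negbTE ->.
by rewrite mul0r.
Qed.

Lemma degree_leD d g1 g2 :
  degree_le d g1 -> degree_le d g2 -> degree_le d (fun T => g1 T + g2 T).
Proof.
move=> [c1 [s1 e1]] [c2 [s2 e2]]; exists (fun J => c1 J + c2 J); split.
  by move=> J; have [->|/s1 //] := eqVneq (c1 J) 0; rewrite add0r => /s2.
by move=> T TF; rewrite e1 // e2 // -big_split; apply: eq_bigr => J _; rewrite mulrDl.
Qed.

Lemma degree_leZ d a g :
  degree_le d g -> degree_le d (fun T => a * g T).
Proof.
move=> [c [sc ec]]; exists (fun J => a * c J); split.
  by move=> J; have [->|/sc //] := eqVneq (c J) 0; rewrite mulr0 eqxx.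
by move=> T TF; rewrite ec // mulr_sumr; apply: eq_bigr => J _; rewrite mulrA.
Qed.

Lemma degree_leM d1 d2 g1 g2 :
  degree_le d1 g1 -> degree_le d2 g2 -> degree_le (d1 + d2) (fun T => g1 T * g2 T).
Proof.
move=> [c1 [s1 e1]] [c2 [s2 e2]].
exists (fun J => \sum_(p | p.1 :|: p.2 == J) c1 p.1 * c2 p.2); split.
  move=> J; apply: contraNT => bad; apply/eqP/big1 => -[J1 J2] /eqP /= eJ.
  have [->|/s1/andP[J1F J1d]] := eqVneq (c1 J1) 0; first by rewrite mul0r.
  have [->|/s2/andP[J2F J2d]] := eqVneq (c2 J2) 0; first by rewrite mulr0.
  move: bad; rewrite -eJ subUset J1F J2F /=.
  by rewrite (leq_trans (leq_card_setU J1 J2)) ?leq_add.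
move=> T TF; rewrite e1 // e2 // mulr_suml.
under eq_bigr do rewrite mulr_sumr.
rewrite pair_big (partition_big (fun p => p.1 :|: p.2) xpredT) //=.
apply: eq_bigr => J _; rewrite mulr_suml; apply: eq_bigr => -[J1 J2] /= /eqP <-.
by rewrite subUset -mulnb natrM mulrACA.
Qed.

Lemma degree_le_sum (I : Type) (s : seq I) d (g : I -> {set X} -> R) :
  (forall i, degree_le d (g i)) -> degree_le d (fun T => \sum_(i <- s) g i T).
Proof.
move=> gd; elim: s => [|i s IH].
  by apply: degree_le_ext (degree_le_widen (leq0n d) (degree_le_cst 0)) => T _; rewrite big_nil.
by apply: degree_le_ext (degree_leD (gd i) IH) => T _; rewrite big_cons.
Qed.

Lemma degree_le_prod (I : Type) (s : seq I) (g : I -> {set X} -> R) :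
  (forall i, degree_le 1 (g i)) -> degree_le (size s) (fun T => \prod_(i <- s) g i T).
Proof.
move=> gd; elim: s => [|i s IH].
  by apply: degree_le_ext (degree_le_cst 1) => T _; rewrite big_nil.
by apply: degree_le_ext (degree_leM (gd i) IH) => T _; rewrite big_cons.
Qed.

End SetFunctionDegree.

Section FallingPoly.
Variable R : comNzRingType.

Definition falling_poly (j : nat) : {poly R} := \prod_(i < j) ('X - i%:R%:P).

Lemma size_falling_poly j : size (falling_poly j) = j.+1.
Proof.
rewrite /falling_poly -(big_map (fun i : 'I_j => i%:R) xpredT (fun a => 'X - a%:P)).
by rewrite size_prod_XsubC size_map /index_enum -enumT size_enum_ord.
Qed.

Lemma falling_polyE j k : (falling_poly j).[k%:R] = (k ^_ j)%:R.
Proof.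
elim: j => [|j IH]; first by rewrite /falling_poly big_ord0 hornerC.
rewrite /falling_poly big_ord_recr /= hornerM -/(falling_poly j) IH hornerXsubC.
rewrite ffactnSr; have [jk|kj] := leqP j k; first by rewrite natrM natrB.
by rewrite ffact_small // !mul0r.
Qed.

End FallingPoly.

Section Symmetrization.
Variables (R : numFieldType) (X : finType) (F : {set X}).
Implicit Types (d k : nat) (J T : {set X}) (h : {set X} -> R).

Definition symmetrizes (r : {poly R}) h :=
  forall k, \sum_(T in draws F k) h T = 'C(#|F|, k)%:R * r.[k%:R].

Lemma sum_draws_supset J k : J \subset F ->
  \sum_(T in draws F k) ((J \subset T)%:R : R) =
  'C(#|F|, k)%:R * ((k ^_ #|J|)%:R / ('C(#|F|, #|J|) * #|J|`!)%:R).
Proof.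
move=> JF.
have Cnz : ('C(#|F|, #|J|)%:R : R) != 0 by rewrite pnatr_eq0 -lt0n bin_gt0 subset_leq_card.
have fact_nz : (#|J|`!%:R : R) != 0 by rewrite pnatr_eq0 -lt0n fact_gt0.
transitivity (\sum_(T in [set T in draws F k | J \subset T]) 1 : R).
  rewrite big_mkcond [RHS]big_mkcond; apply: eq_bigr => T _.
  by rewrite inE; case: (_ \in _); case: (J \subset T).
rewrite sumr_const -bin_ffact; apply: (mulIf Cnz).
rewrite -natrM card_draws_supset_mul // !natrM; field.
by rewrite Cnz fact_nz.
Qed.

Lemma degree_le_symmetrizes d h :
  degree_le F d h -> exists2 r : {poly R}, (size r <= d.+1)%N & symmetrizes r h.
Proof.
case=> c [sc ec].
exists (\sum_J (c J / ('C(#|F|, #|J|) * #|J|`!)%:R) *: falling_poly R #|J|).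
  apply: (big_ind (fun p : {poly R} => size p <= d.+1)%N) => [|p q sp sq|J _].
  - by rewrite size_poly0.
  - by rewrite (leq_trans (size_add _ _)) // geq_max sp sq.
  have [->|/sc/andP[_ Jd]] := eqVneq (c J) 0; first by rewrite mul0r scale0r size_poly0.
  by rewrite (leq_trans (size_scale_leq _ _)) // size_falling_poly.
move=> k; rewrite horner_sum mulr_sumr.
rewrite (eq_bigr (fun T => \sum_J c J * (J \subset T)%:R)); last first.
  by move=> T; rewrite inE => /andP[TF _]; rewrite ec.
rewrite exchange_big /=; apply: eq_bigr => J _.
rewrite -mulr_sumr hornerZ falling_polyE.
have [->|/sc/andP[JF _]] := eqVneq (c J) 0; first by rewrite !mul0r mulr0.
by rewrite sum_draws_supset //; ring.
Qed.

End Symmetrization.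

Section SymmetrizedValues.
Variables (R : numFieldType) (X : finType) (F : {set X}).
Variables (h : {set X} -> R) (r : {poly R}).
Hypothesis r_sym : symmetrizes F r h.
Implicit Types (k : nat) (T : {set X}).

Lemma symmetrizes_horner0 : h set0 = 0 -> r.[0] = 0.
Proof. by move=> h0; have := r_sym 0; rewrite draws0 big_set1 h0 bin0 mul1r. Qed.

Lemma symmetrizes_horner1 :
  (0 < #|F|)%N -> (forall B, B \in F -> h [set B] = 1) -> r.[1] = 1.
Proof.
move=> F_gt0 h1; have := r_sym 1; rewrite bin1.
rewrite (eq_bigr (fun=> 1)) => [|T]; last first.
  by rewrite inE => /andP[TF /cards1P[B eT]]; rewrite eT h1 // -sub1set -eT.
have F_nz : (#|F|%:R : R) != 0 by rewrite pnatr_eq0 -lt0n.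
by rewrite sumr_const cards_draws bin1 -{1}[#|F|%:R]mulr1 => /(mulfI F_nz)/esym.
Qed.

Lemma symmetrizes_horner_card : r.[#|F|%:R] = h F.
Proof. by have := r_sym #|F|; rewrite draws_card big_set1 binn mul1r. Qed.

Lemma symmetrizes_horner_bounded k :
  (forall T, T \subset F -> 0 <= h T <= 1) -> (k <= #|F|)%N -> 0 <= r.[k%:R] <= 1.
Proof.
move=> h01 kF; have C_gt0 : (0 : R) < 'C(#|F|, k)%:R by rewrite ltr0n bin_gt0.
have sum_ge0 : 0 <= \sum_(T in draws F k) h T.
  by apply: sumr_ge0 => T /[1!inE] /andP[/h01/andP[]].
have sum_le : \sum_(T in draws F k) h T <= 'C(#|F|, k)%:R.
  rewrite -cards_draws -sumr_const; apply: ler_sum => T /[1!inE] /andP[/h01/andP[]] //.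
rewrite r_sym in sum_ge0 sum_le.
by rewrite -(pmulr_rge0 _ C_gt0) sum_ge0 -(ler_pM2l C_gt0) mulr1.
Qed.

End SymmetrizedValues.

Lemma inner_row_coef (R : nzRingType) d (r : {poly R}) (t : R) :
  (size r <= d.+1)%N -> r.[0] = 0 -> inner (\row_(i < d) r`_i.+1) (moment d t) = r.[t].
Proof.
move=> size_r r0; rewrite (horner_coef_wide t size_r) big_ord_recl -horner_coef0 r0.
by rewrite mul0r add0r; apply: eq_bigr => i _; rewrite !mxE.
Qed.

Lemma flip_set0 n (x : cube n) : flip x set0 = x.
Proof. by apply/ffunP => i; rewrite ffunE in_set0. Qed.

Section BlockRestriction.
Variables (R : comNzRingType) (n : nat) (x : cube n) (F : {set {set 'I_n}}).
Hypothesis trivF : trivIset F.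
Implicit Types (T : {set {set 'I_n}}) (i : 'I_n).

Lemma mem_cover_pblock T i :
  T \subset F -> i \in cover F -> (i \in cover T) = (pblock F i \in T).
Proof.
move=> TF iF; apply/bigcupP/idP => [[B BT iB]|iT].
  by rewrite (def_pblock trivF (subsetP TF B BT) iB).
by exists (pblock F i); rewrite // mem_pblock.
Qed.

Lemma notin_cover_sub T i : T \subset F -> i \notin cover F -> i \notin cover T.
Proof.
move=> TF; apply: contra => /bigcupP[B BT iB].
by apply/bigcupP; exists B; first exact: (subsetP TF).
Qed.

Lemma degree_le_flip_cover i :
  degree_le F 1 (fun T => ((flip x (cover T) i)%:R : R)).
Proof.
have xi_cst := degree_le_widen (leq0n 1) (degree_le_cst F ((x i)%:R : R)).
have [iF|iF] := boolP (i \in cover F); last first.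
  by apply: degree_le_ext xi_cst => T TF; rewrite ffunE (negbTE (notin_cover_sub TF iF)).
(* x_i xor [B \in T] = x_i + (1 - 2 x_i) [B \in T] for the block B of F containing i *)
have := degree_leD xi_cst (degree_leZ (1 - 2 * (x i)%:R) (degree_le_mem R (pblock_mem iF))).
apply: degree_le_ext => T TF; rewrite ffunE mem_cover_pblock //.
by case: (pblock F i \in T); case: (x i) => /=; ring.
Qed.

Lemma degree_le_mleval_flip_cover (P : mlpoly R n) :
  degree_le F (mldeg P) (fun T => mleval P (flip x (cover T))).
Proof.
rewrite /mleval; apply: degree_le_sum => S; have [->|PS] := eqVneq (P S) 0.
  by apply: degree_le_ext (degree_le_widen (leq0n _) (degree_le_cst F 0)) => T _; rewrite mul0r.
apply/degree_leZ/(degree_le_widen (leq_bigmax_cond S PS)); rewrite cardE.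
by apply: degree_le_ext (degree_le_prod (enum S) degree_le_flip_cover) => T _; rewrite big_enum.
Qed.

Lemma degree_le_sensitivity (f : cube n -> bool) (P : mlpoly R n) :
  (forall y, mleval P y = (f y)%:R) ->
  degree_le F (mldeg P) (fun T => ((f (flip x (cover T)) != f x)%:R : R)).
Proof.
move=> fP; have Pd := degree_le_mleval_flip_cover P.
case: (f x).
  have := degree_leD (degree_le_widen (leq0n _) (degree_le_cst F 1)) (degree_leZ (-1) Pd).
  by apply: degree_le_ext => T _; rewrite fP; case: (f _) => /=; ring.
by apply: degree_le_ext Pd => T _; rewrite fP; case: (f _).
Qed.

End BlockRestriction.

Lemma sens_blocksP n (f : cube n -> bool) x (F : {set {set 'I_n}}) :
  reflect ({in F, forall B, f (flip x B) != f x} /\ trivIset F) (sens_blocks f x F).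
Proof.
apply: (iffP andP) => [[/forall_inP sens /forall_inP disj] | [sens /trivIsetP disj]].
  split=> //; apply/trivIsetP => B C BF CF; exact: (implyP (forall_inP (disj B BF) C CF)).
split; apply/forall_inP => // B BF; apply/forall_inP => C CF; apply/implyP; exact: disj.
Qed.

Lemma bs_witness n (f : cube n -> bool) : exists x F, sens_blocks f x F /\ #|F| = bs f.
Proof.
have [x ->] : {x : cube n | bs f = bs_at f x}.
  by apply: bigop.eq_bigmax; apply/card_gt0P; exists [ffun=> false].
have sens0 : sens_blocks f x set0 by apply/andP; split; apply/forall_inP => B; rewrite in_set0.
exists x; rewrite /bs_at (bigop.bigmax_eq_arg set0 sens0).
by case: arg_maxnP => // F sF _; exists F.
Qed.

Theorem proposition9 (R : realType) (n d b : nat) (f : cube n -> bool) :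
  (1 <= d)%N -> has_degree R f d -> bs f = b ->
  exists (tau : bool) (p : 'rV[R]_d),
    [/\ inner p (moment d 1) = 1,
        (forall k : nat, (2 <= k <= b.-1)%N ->
           0 <= inner p (moment d k%:R) <= 1)
      & inner p (moment d b%:R) = tau%:R].
Proof.
move=> d_gt0 [P [fP degP]] <-.
have [x [F [/sens_blocksP[sensF trivF] <-]]] := bs_witness f.
have [F0|F_gt0] := posnP #|F|.
  exists false, (\row_(i < d) ('X : {poly R})`_i.+1).
  rewrite !inner_row_coef ?size_polyX ?hornerX ?F0 //; split=> // k; lia.
pose h T : R := (f (flip x (cover T)) != f x)%:R.
have [r size_r r_sym] : exists2 r : {poly R}, (size r <= d.+1)%N & symmetrizes F r h.
  by apply: degree_le_symmetrizes; rewrite -degP; exact: degree_le_sensitivity.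
have r0 : r.[0] = 0.
  apply: (symmetrizes_horner0 r_sym).
  by rewrite /h /cover big_set0 flip_set0 eqxx.
exists (f (flip x (cover F)) != f x), (\row_(i < d) r`_i.+1).
rewrite !inner_row_coef //; split.
- by apply: symmetrizes_horner1 r_sym F_gt0 _ => B BF; rewrite /h cover1 sensF.
- move=> k /andP[_ kF]; rewrite inner_row_coef //.
  apply: (symmetrizes_horner_bounded r_sym) => [T _|]; last by lia.
  by rewrite /h ler0n lern1 leq_b1.
- exact: symmetrizes_horner_card r_sym.
Qed.
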